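(* Consider the networked feedback system described in the context, under the input assumption stated there. Then for any integers $k_1\ge k_2\ge 0$, the random variable $\tau_{k_1}$ is independent of the channel inputs $u(k_1)$ and $u(k_2)$.
   Context: Setting: $P$ is a single-input single-output discrete-time linear time-invariant plant which is strictly proper (relative degree $\ge 1$), and $K$ is a proper SISO LTI controller. Let $\tau\ge0$ be an integer, $\mathcal D=\{0,\dots,\tau\}$, and $\{\tau_n\}$ an i.i.d. sequence with values in $\mathcal D$, $\Pr\{\tau_n=i\}=p_i$, $\sum_i p_i=1$ ($\tau_n$ is the delay of the datum sent at time $n$). With fixed real weights $\alpha_0,\dots,\alpha_\tau$ and Kronecker delta $\delta$, the channel maps its input $u$ to $u_d(k)=\sum_{i=0}^{\tau}\alpha_i\delta(\tau_{k-i}-i)u(k-i)$. The closed loop is: plant input $v(k)-u_d(k)$, plant output $y=P(v-u_d)$, controller output $u=Ky$; all signals are real and the system is at rest at $k=0$ (all signals vanish for $k<0$). Input assumption: $\{\tau_n\}$ is independent of $\{v(k)\}$, and $\{v(k)\}$ is a zero-mean white noise (independent values) with bounded variances $\sigma_v^2(k)$. *)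

From HB Require Import structures.
From mathcomp Require Import all_boot all_order all_algebra.
From mathcomp Require Import all_classical all_reals all_analysis.
Set Implicit Arguments. Unset Strict Implicit. Unset Printing Implicit Defensive.
Import Order.TTheory GRing.Theory Num.Theory.
Local Open Scope classical_set_scope.
Local Open Scope ring_scope.

Section independence.
Context d (T : measurableType d) (R : realType) (P : probability T R).
Local Open Scope ereal_scope.

Definition rv_events d' (U : measurableType d') (X : T -> U) : set (set T) :=
  [set X @^-1` B | B in measurable].

Definition mutually_independent (I : eqType) (F : I -> set (set T)) :=
  forall (J : seq I) (E : I -> set T), uniq J ->
    (forall i, i \in J -> F i (E i)) ->
    P (\big[setI/setT]_(i <- J) E i) = \prod_(i <- J) P (E i).

(* independence of two families of sigma-algebras (i.e. of the
   sigma-algebras they generate): every finite intersection of events of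
   the first family is independent of every finite intersection of events
   of the second family *)
Definition independent_families (I1 I2 : eqType)
    (F1 : I1 -> set (set T)) (F2 : I2 -> set (set T)) :=
  forall (J1 : seq I1) (J2 : seq I2) (E1 : I1 -> set T) (E2 : I2 -> set T),
    (forall i, i \in J1 -> F1 i (E1 i)) ->
    (forall i, i \in J2 -> F2 i (E2 i)) ->
    P ((\big[setI/setT]_(i <- J1) E1 i) `&` (\big[setI/setT]_(j <- J2) E2 j))
    = P (\big[setI/setT]_(i <- J1) E1 i) * P (\big[setI/setT]_(j <- J2) E2 j).

Definition independent_rv d1 d2 (U1 : measurableType d1)
    (U2 : measurableType d2) (X : T -> U1) (Y : T -> U2) :=
  forall (A : set U1) (B : set U2), measurable A -> measurable B ->
    P (X @^-1` A `&` Y @^-1` B) = P (X @^-1` A) * P (Y @^-1` B).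

End independence.

From HB Require Import structures.
From mathcomp Require Import all_boot all_order all_algebra.
From mathcomp Require Import all_classical all_reals all_analysis.
From mathcomp Require Import measurable_realfun.
Set Implicit Arguments. Unset Strict Implicit. Unset Printing Implicit Defensive.
Import Order.TTheory GRing.Theory Num.Theory.
Local Open Scope classical_set_scope.
Local Open Scope ring_scope.

(** The closed loop is causal: [u(k1)] and [u(k2)] are measurable functions of
    [tau_j] and [v(j)] for [j < k1] only, because the plant is strictly proper
    and [u_d(j)] depends on [tau_(j-i)] and [u(j-i)] with [j - i <= j].  Finite
    intersections of events [tau_j^-1 A_j `&` v_j^-1 B_j], [j < k1], form a
    pi-system generating that sigma-algebra; by the i.i.d. property of the
    delays and their independence from [v], each such event is independent of
    [{tau_k1 \in Y}], and the pi-lambda theorem extends this to the whole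
    sigma-algebra. *)

Lemma if_eq_notin (I : eqType) (A : Type) (s : seq I) (i j : I) (a : A)
    (F : I -> A) :
  j \notin s -> i \in s -> (if i == j then a else F i) = F i.
Proof. by move=> js i_s; case: eqP => // eij; move: js; rewrite -eij i_s. Qed.

Section independence_facts.
Context (d : measure_display) (T : measurableType d) (R : realType)
  (P : probability T R).
Local Open Scope ereal_scope.

Lemma mutually_independent_cons (I : eqType) (F : I -> set (set T))
    (j : I) (s : seq I) (Ej : set T) (E : I -> set T) :
  mutually_independent P F -> uniq (j :: s) -> F j Ej ->
  (forall i, i \in s -> F i (E i)) ->
  P (Ej `&` \big[setI/setT]_(i <- s) E i)
  = P Ej * P (\big[setI/setT]_(i <- s) E i).
Proof.
move=> indF ujs Fj Fs; have /andP[js us] := ujs.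
rewrite (indF s E us Fs).
have := indF (j :: s) (fun i => if i == j then Ej else E i) ujs.
rewrite !big_cons eqxx.
under eq_big_seq => i i_s do rewrite (if_eq_notin _ _ js i_s).
under [X in _ * X]eq_big_seq => i i_s do rewrite (if_eq_notin _ _ js i_s).
apply.
by move=> i; rewrite inE; case: eqP => [-> //|_ /Fs].
Qed.

Lemma independent_families_cons (I1 I2 : eqType) (F1 : I1 -> set (set T))
    (F2 : I2 -> set (set T)) (j : I1) (s : seq I1) (t : seq I2)
    (Ej : set T) (E1 : I1 -> set T) (E2 : I2 -> set T) :
  independent_families P F1 F2 -> j \notin s -> F1 j Ej ->
  (forall i, i \in s -> F1 i (E1 i)) -> (forall i, i \in t -> F2 i (E2 i)) ->
  P ((Ej `&` \big[setI/setT]_(i <- s) E1 i) `&` \big[setI/setT]_(i <- t) E2 i)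
  = P (Ej `&` \big[setI/setT]_(i <- s) E1 i) * P (\big[setI/setT]_(i <- t) E2 i).
Proof.
move=> indF js F1j F1s F2t.
have := indF (j :: s) t (fun i => if i == j then Ej else E1 i) E2.
rewrite big_cons eqxx.
under eq_big_seq => i i_s do rewrite (if_eq_notin _ _ js i_s).
apply=> // i.
by rewrite inE; case: eqP => [-> //|_ /F1s].
Qed.

Lemma independent_event_g_sigma (S : set (set T)) (E : set T) :
  measurable E -> S `<=` measurable -> setI_closed S -> S setT ->
  (forall X, S X -> P (E `&` X) = P E * P X) ->
  forall X, <<s S >> X -> P (E `&` X) = P E * P X.
Proof.
move=> mE Smeas SI ST indS.
have PE_ge0 : (0 <= fine (P E))%R by apply/fine_ge0/measure_ge0.
pose r : {nonneg R} := NngNum PE_ge0.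
have rE : (r%:num)%:E = P E by rewrite /= fineK ?fin_num_measure.
(* both sides of the product rule are finite measures in X, equal on S *)
have := @g_sigma_algebra_measure_unique _ R T S Smeas (fun=> setT) (fun=> ST)
  (bigcup_const _ _) (mrestr P mE) (mscale r P) SI.
move=> uniq_ext X SX; rewrite setIC -rE.
apply: (uniq_ext _ _ _ _ SX) => // [A SA|_].
- by change (P (A `&` E) = (r%:num)%:E * P A); rewrite rE setIC indS.
- by change (P (setT `&` E) < +oo); rewrite setTI ltey_eq fin_num_measure.
Qed.

End independence_facts.

Section past_events.
Context (d : measure_display) (T : measurableType d) (R : realType)
  (P : probability T R) (d1 d2 : measure_display)
  (U1 : measurableType d1) (U2 : measurableType d2)
  (X : nat -> T -> U1) (Y : nat -> T -> U2).
Local Open Scope ereal_scope.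

Definition past_events (n : nat) : set (set T) :=
  [set E | exists (A : nat -> set U1) (B : nat -> set U2),
     (forall i, measurable (A i) /\ measurable (B i)) /\
     E = \big[setI/setT]_(i <- iota 0 n) (X i @^-1` A i `&` Y i @^-1` B i)].

Lemma past_events_setI_closed n : setI_closed (past_events n).
Proof.
move=> _ _ [A [B [mAB ->]]] [A' [B' [mAB' ->]]].
exists (fun i => A i `&` A' i), (fun i => B i `&` B' i); split.
  by move=> i; have [? ?] := mAB i; have [? ?] := mAB' i; split; apply: measurableI.
by rewrite -big_split; apply: eq_bigr => i _; rewrite !preimage_setI setIACA.
Qed.

Lemma past_events_setT n : past_events n setT.
Proof.
exists (fun=> setT), (fun=> setT); split => //.
by rewrite big1 // => i _; rewrite !preimage_setT setTI.
Qed.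

Lemma measurable_past_X j n : (j < n)%N ->
  measurable_fun (setT : set (g_sigma_algebraType (past_events n))) (X j).
Proof.
move=> jn _ A mA; rewrite setTI; apply: sub_sigma_algebra.
exists (fun i => if i == j then A else setT), (fun=> setT).
split; first by move=> i; case: eqP.
have jin : j \in iota 0 n by rewrite mem_iota.
rewrite (bigD1_seq j jin (iota_uniq 0 n)) /= eqxx preimage_setT setIT big1 ?setIT //.
by move=> i /negbTE ->; rewrite !preimage_setT setIT.
Qed.

Lemma measurable_past_Y j n : (j < n)%N ->
  measurable_fun (setT : set (g_sigma_algebraType (past_events n))) (Y j).
Proof.
move=> jn _ B mB; rewrite setTI; apply: sub_sigma_algebra.
exists (fun=> setT), (fun i => if i == j then B else setT).
split; first by move=> i; case: eqP.
have jin : j \in iota 0 n by rewrite mem_iota.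
rewrite (bigD1_seq j jin (iota_uniq 0 n)) /= eqxx preimage_setT setTI big1 ?setIT //.
by move=> i /negbTE ->; rewrite !preimage_setT setIT.
Qed.

Lemma past_events_measurable n :
  (forall i, measurable_fun setT (X i)) -> (forall i, measurable_fun setT (Y i)) ->
  past_events n `<=` measurable.
Proof.
move=> mX mY _ [A [B [mAB ->]]].
apply: (big_ind measurable) => [//||i _]; first exact: measurableI.
have [mA mB] := mAB i.
by apply: measurableI; rewrite -[_ @^-1` _]setTI; [exact: mX | exact: mY].
Qed.

Lemma independent_past_events n (A0 : set U1) (E : set T) :
  mutually_independent P (fun i => rv_events (X i)) ->
  independent_families P (fun i => rv_events (X i)) (fun i => rv_events (Y i)) ->
  measurable A0 -> past_events n E ->
  P (X n @^-1` A0 `&` E) = P (X n @^-1` A0) * P E.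
Proof.
move=> indX indXY mA0 [A [B [mAB ->]]].
have n_past : n \notin iota 0 n by rewrite mem_iota ltnn andbF.
have evX i : i \in iota 0 n -> rv_events (X i) (X i @^-1` A i).
  by move=> _; exists (A i) => //; have [] := mAB i.
have evY i : i \in iota 0 n -> rv_events (Y i) (Y i @^-1` B i).
  by move=> _; exists (B i) => //; have [] := mAB i.
have evXn : rv_events (X n) (X n @^-1` A0) by exists A0.
have u_n_past : uniq (n :: iota 0 n) by rewrite /= n_past iota_uniq.
rewrite big_split /= setIA (independent_families_cons indXY n_past evXn evX evY).
rewrite (mutually_independent_cons indX u_n_past evXn evX) -muleA.
by rewrite (indXY _ _ _ _ evX evY).
Qed.

End past_events.

Section measurable_cV.
Context (d : measure_display) (T : measurableType d) (R : realType).

Definition measurable_cV n (x : T -> 'cV[R]_n) :=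
  forall i, measurable_fun setT (fun w => x w i 0).

Lemma measurable_cV0 n : measurable_cV (fun=> 0 : 'cV[R]_n).
Proof. by move=> i; under eq_fun do rewrite mxE; exact: measurable_cst. Qed.

Lemma measurable_mulmx_cV m n (M : 'M[R]_(m, n)) (x : T -> 'cV[R]_n) i :
  measurable_cV x -> measurable_fun setT (fun w => (M *m x w) i 0).
Proof.
move=> mx; under eq_fun do rewrite mxE.
by apply: measurable_sum => l; apply: measurable_funM => //; exact: measurable_cst.
Qed.

Lemma measurable_cV_affine m n (M : 'M[R]_(m, n)) (b : 'cV[R]_m)
    (x : T -> 'cV[R]_n) (s : T -> R) :
  measurable_cV x -> measurable_fun setT s ->
  measurable_cV (fun w => M *m x w + s w *: b).
Proof.
move=> mx ms i; under eq_fun do rewrite mxE [X in _ + X]mxE.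
apply: measurable_funD; first exact: measurable_mulmx_cV.
by apply: measurable_funM => //; exact: measurable_cst.
Qed.

End measurable_cV.

Section closed_loop_measurability.
Context (d : measure_display) (T : measurableType d) (R : realType)
  (taumax : nat) (alpha : nat -> R) (tau : nat -> T -> nat) (v : nat -> T -> R)
  (np : nat) (A : 'M[R]_np) (B : 'cV[R]_np) (C : 'rV[R]_np)
  (nc : nat) (Ak : 'M[R]_nc) (Bk : 'cV[R]_nc) (Ck : 'rV[R]_nc) (Dk : R)
  (xp : nat -> T -> 'cV[R]_np) (xc : nat -> T -> 'cV[R]_nc)
  (y u ud : nat -> T -> R).
Hypothesis xp0 : forall w, xp 0%N w = 0.
Hypothesis xpS : forall k w, xp k.+1 w = A *m xp k w + (v k w - ud k w) *: B.
Hypothesis yE : forall k w, y k w = (C *m xp k w) 0 0.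
Hypothesis xc0 : forall w, xc 0%N w = 0.
Hypothesis xcS : forall k w, xc k.+1 w = Ak *m xc k w + y k w *: Bk.
Hypothesis uE : forall k w, u k w = (Ck *m xc k w) 0 0 + Dk * y k w.
Hypothesis udE : forall k w, ud k w =
  \sum_(i < taumax.+1 | (i <= k)%N) alpha i * (tau (k - i)%N w == i)%:R * u (k - i)%N w.

Variable n : nat.
Hypothesis mtau : forall j, (j < n)%N -> measurable_fun setT (tau j).
Hypothesis mv : forall j, (j < n)%N -> measurable_fun setT (v j).

Lemma measurable_y k : measurable_cV (xp k) -> measurable_fun setT (y k).
Proof. by move=> mxp; rewrite (funext (yE k)); exact: measurable_mulmx_cV. Qed.

Lemma measurable_u k :
  measurable_cV (xp k) -> measurable_cV (xc k) -> measurable_fun setT (u k).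
Proof.
move=> mxp mxc; rewrite (funext (uE k)).
apply: measurable_funD; first exact: measurable_mulmx_cV.
by apply: measurable_funM; [exact: measurable_cst | exact: measurable_y].
Qed.

Lemma measurable_ud k : (k < n)%N ->
  (forall j, (j <= k)%N -> measurable_fun setT (u j)) -> measurable_fun setT (ud k).
Proof.
move=> kn mu; rewrite (funext (udE k)).
under eq_fun do rewrite big_mkcond.
apply: measurable_sum => i /=; case: (i <= k)%N; last exact: measurable_cst.
apply: measurable_funM; last exact/mu/leq_subr.
apply: measurable_funM; first exact: measurable_cst.
apply: (measurableT_comp (f := fun m : nat => (m == i)%:R : R)) => //.
exact/mtau/(leq_ltn_trans (leq_subr _ _)).
Qed.

Lemma measurable_states k :
  (k <= n)%N -> measurable_cV (xp k) /\ measurable_cV (xc k).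
Proof.
elim/ltn_ind: k => -[_ _|k IH kn].
  by rewrite (funext xp0) (funext xc0); split; exact: measurable_cV0.
have [mxp mxc] := IH k (ltnSn k) (ltnW kn).
have mud : measurable_fun setT (ud k).
  apply: measurable_ud => // j jk.
  have [] := IH j (leq_ltn_trans jk (ltnSn k)) (leq_trans jk (ltnW kn)).
  exact: measurable_u.
rewrite (funext (xpS k)) (funext (xcS k)); split; apply: measurable_cV_affine => //.
- by apply: measurable_funB => //; exact: mv.
- exact: measurable_y.
Qed.

Lemma measurable_closed_loop_u k : (k <= n)%N -> measurable_fun setT (u k).
Proof. by move=> kn; have [] := measurable_states kn; exact: measurable_u. Qed.

End closed_loop_measurability.

Theorem lemma3
  (* probability space *)
  (d : measure_display) (T : measurableType d) (R : realType)
  (P : probability T R)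
  (* maximal delay tau, probabilities p_i, channel weights alpha_i *)
  (taumax : nat) (p : nat -> R) (alpha : nat -> R)
  (* delay sequence {tau_n} and exogenous input {v(k)} *)
  (tau : nat -> T -> nat) (v : nat -> T -> R)
  (* plant P: strictly proper SISO LTI, state-space realization (A,B,C), D = 0 *)
  (np : nat) (A : 'M[R]_np) (B : 'cV[R]_np) (C : 'rV[R]_np)
  (* controller K: proper SISO LTI, state-space data (Ak,Bk,Ck,Dk) *)
  (nc : nat) (Ak : 'M[R]_nc) (Bk : 'cV[R]_nc) (Ck : 'rV[R]_nc) (Dk : R)
  (* closed-loop signals (pathwise) *)
  (xp : nat -> T -> 'cV[R]_np) (xc : nat -> T -> 'cV[R]_nc)
  (y u ud : nat -> T -> R) :
  (* {tau_n}: i.i.d., values in {0,...,taumax}, Pr{tau_n = i} = p_i *)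
  (forall n, measurable_fun setT (tau n)) ->
  (forall n w, (tau n w <= taumax)%N) ->
  (forall n i, P (tau n @^-1` [set i]) = (p i)%:E) ->
  \sum_(i < taumax.+1) p i = 1 ->
  mutually_independent P (fun n => rv_events (tau n)) ->
  (* {v(k)}: zero-mean white noise with bounded variances *)
  (forall k, measurable_fun setT (v k)) ->
  mutually_independent P (fun k => rv_events (v k)) ->
  (forall k, v k \in Lfun P 2) ->
  (forall k, ('E_P[v k] = 0)%E) ->
  (exists M : R, forall k, ('V_P[v k] <= M%:E)%E) ->
  (* {tau_n} independent of {v(k)} *)
  independent_families P (fun n => rv_events (tau n)) (fun k => rv_events (v k)) ->
  (* plant y = P(v - u_d), at rest at k = 0 *)
  (forall w, xp 0%N w = 0) ->
  (forall k w, xp k.+1 w = A *m xp k w + (v k w - ud k w) *: B) ->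
  (forall k w, y k w = (C *m xp k w) 0 0) ->
  (* controller u = K y, at rest at k = 0 *)
  (forall w, xc 0%N w = 0) ->
  (forall k w, xc k.+1 w = Ak *m xc k w + y k w *: Bk) ->
  (forall k w, u k w = (Ck *m xc k w) 0 0 + Dk * y k w) ->
  (* channel: u_d(k) = sum_{i=0}^{tau} alpha_i delta(tau_{k-i} - i) u(k-i),
     terms with k - i < 0 vanish *)
  (forall k w, ud k w =
     \sum_(i < taumax.+1 | (i <= k)%N)
        alpha i * (tau (k - i)%N w == i)%:R * u (k - i)%N w) ->
  forall k1 k2 : nat, (k2 <= k1)%N ->
    independent_rv P (tau k1) (fun w => (u k1 w, u k2 w)).
Proof.
move=> mtau _ _ _ indtau mv _ _ _ _ indtauv xp0 xpS yE xc0 xcS uE udE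
  k1 k2 k21 Y Z mY mZ.
pose past := past_events tau v k1.
have mu k : (k <= k1)%N -> measurable_fun (setT : set (g_sigma_algebraType past)) (u k).
  move=> kk1; apply: (measurable_closed_loop_u (T := g_sigma_algebraType past)
    xp0 xpS yE xc0 xcS uE udE _ _ kk1) => j jk1.
  - exact: measurable_past_X.
  - exact: measurable_past_Y.
have mtauY : measurable (tau k1 @^-1` Y) by rewrite -[_ @^-1` _]setTI; exact: mtau.
apply: (independent_event_g_sigma (S := past) mtauY).
- exact: (past_events_measurable (n := k1) mtau mv).
- exact: (past_events_setI_closed (X := tau) (Y := v) (n := k1)).
- exact: (past_events_setT tau v k1).
- by move=> E; exact: independent_past_events.
- have := measurable_fun_pair (mu k1 (leqnn k1)) (mu k2 k21) measurableT mZ.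
  by rewrite setTI.
Qed.
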